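(* The generating function $$G_{(231,312)}(x,p,q,y,z)=\sum_{n\ge 0}\ \sum_{\pi\in S_n(231,312)} x^n p^{\operatorname{asc}(\pi)} q^{\operatorname{des}(\pi)} y^{\operatorname{MNA}(\pi)} z^{\operatorname{MND}(\pi)}$$ is equal to $$\frac{1 + x + p x^2 y - p^2 x^2 y + q x^2 z - q^2 x^2 z - p q x^2 y z + p q x^3 y z - p^2 q x^3 y z - p q^2 x^3 y z}{1 - p^2 x^2 y - q^2 x^2 z - p q x^2 y z - p^2 q x^3 y z - p q^2 x^3 y z}.$$
   Context: For $n\ge 0$, $S_n$ denotes the set of permutations $\pi=\pi_1\pi_2\cdots\pi_n$ of $[n]=\{1,\dots,n\}$ ($S_0$ consists of the empty permutation, for which all statistics below are $0$). A permutation $\pi\in S_n$ avoids a pattern $\tau\in S_k$ if there are no indices $i_1<\dots<i_k$ such that $\pi_{i_a}<\pi_{i_b}$ if and only if $\tau_a<\tau_b$; $S_n(\tau,\rho)$ is the set of permutations in $S_n$ avoiding both $\tau$ and $\rho$. $\operatorname{asc}(\pi)$ (resp. $\operatorname{des}(\pi)$) is the number of $i\in[n-1]$ with $\pi_i<\pi_{i+1}$ (resp. $\pi_i>\pi_{i+1}$). $\operatorname{MNA}(\pi)$ is the maximum size of a set $I\subseteq[n-1]$ such that $\pi_i<\pi_{i+1}$ for all $i\in I$ and $|i-j|\ge 2$ for distinct $i,j\in I$; $\operatorname{MND}(\pi)$ is defined analogously with $\pi_i>\pi_{i+1}$. *)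

From HB Require Import structures.
From mathcomp Require Import all_boot all_order all_algebra all_fingroup.
Set Implicit Arguments. Unset Strict Implicit. Unset Printing Implicit Defensive.
Import Order.TTheory GRing.Theory Num.Theory.

(* A permutation of [n] is represented by s : 'S_n (values 0..n-1, positions
   0..n-1); its one-line notation is the sequence of values. *)
Definition oneline (n : nat) (s : 'S_n) : seq nat :=
  [seq val (s i) | i <- enum 'I_n].

Definition avoids (n : nat) (s : 'S_n) (tau : seq nat) : bool :=
  ~~ [exists f : {ffun 'I_(size tau) -> 'I_n},
        [forall a : 'I_(size tau), forall b : 'I_(size tau),
           ((a < b) ==> (f a < f b)) &&
           ((s (f a) < s (f b)) == (nth 0 tau a < nth 0 tau b))]].

(* 0-based: position i (with i.+1 < n) is an ascent if s_i < s_{i+1} *)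
Definition is_asc (n : nat) (s : 'S_n) (i : nat) : bool :=
  (i.+1 < n) && (nth 0 (oneline s) i < nth 0 (oneline s) i.+1).
Definition is_des (n : nat) (s : 'S_n) (i : nat) : bool :=
  (i.+1 < n) && (nth 0 (oneline s) i.+1 < nth 0 (oneline s) i).

Definition asc (n : nat) (s : 'S_n) : nat := count (is_asc s) (iota 0 n).
Definition des (n : nat) (s : 'S_n) : nat := count (is_des s) (iota 0 n).

Definition nonadj (n : nat) (I : {set 'I_n}) : bool :=
  [forall i in I, forall j in I, (i != j) ==> ((i.+1 < j) || (j.+1 < i))].

Definition MNA (n : nat) (s : 'S_n) : nat :=
  \max_(I : {set 'I_n} | [forall i in I, is_asc s i] && nonadj I) #|I|.
Definition MND (n : nat) (s : 'S_n) : nat :=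
  \max_(I : {set 'I_n} | [forall i in I, is_des s i] && nonadj I) #|I|.

Local Open Scope ring_scope.

(* coefficient of x^n in G_{(231,312)}(x,p,q,y,z) *)
Definition Gcoef (R : comNzRingType) (p q y z : R) (n : nat) : R :=
  \sum_(s : 'S_n | avoids s [:: 2; 3; 1]%N && avoids s [:: 3; 1; 2]%N)
     p ^+ asc s * q ^+ des s * y ^+ MNA s * z ^+ MND s.

Definition Gnum (R : comNzRingType) (p q y z : R) : {poly R} :=
  let P := p%:P in let Q := q%:P in let Y := y%:P in let Z := z%:P in
  let x := 'X in
  1 + x + P * x^+2 * Y - P^+2 * x^+2 * Y + Q * x^+2 * Z - Q^+2 * x^+2 * Z
    - P * Q * x^+2 * Y * Z + P * Q * x^+3 * Y * Z - P^+2 * Q * x^+3 * Y * Z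
    - P * Q^+2 * x^+3 * Y * Z.

Definition Gden (R : comNzRingType) (p q y z : R) : {poly R} :=
  let P := p%:P in let Q := q%:P in let Y := y%:P in let Z := z%:P in
  let x := 'X in
  1 - P^+2 * x^+2 * Y - Q^+2 * x^+2 * Z - P * Q * x^+2 * Y * Z
    - P^+2 * Q * x^+3 * Y * Z - P * Q^+2 * x^+3 * Y * Z.

From HB Require Import structures.
From mathcomp Require Import all_boot all_order all_algebra all_fingroup.
From mathcomp Require Import zify ring.
Set Implicit Arguments. Unset Strict Implicit. Unset Printing Implicit Defensive.
Import Order.TTheory GRing.Theory Num.Theory.

(* A permutation avoiding 231 and 312 is layered: its maximal runs of descents
   are decreasing blocks, and every value of a block exceeds all values of the
   blocks to its left.  It is therefore determined by its descent word, and
   every boolean word of length n-1 occurs.  All four statistics are read off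
   that word (MNA and MND by a greedy count), so the coefficient of x^n is a sum
   of weights over all words.  Reading a word letter by letter, remembering
   whether the previous ascent or descent was taken by the greedy count, gives
   a three-state transfer recursion; eliminating the two auxiliary states yields
     G_(n+4) = (p^2 y + q^2 z + p q y z) G_(n+2) + (p^2 q + p q^2) y z G_(n+1),
   which is the denominator, and the numerator is fixed by G_0, ..., G_3. *)

(** * Maximal sets of non-adjacent positions *)

Fixpoint mna (l : seq bool) : nat :=
  match l with
  | [::] => 0
  | false :: l' => mna l'
  | true :: [::] => 1
  | true :: _ :: l'' => (mna l'').+1
  end.

Fixpoint mna_witness (l : seq bool) : seq bool :=
  match l with
  | [::] => [::]
  | false :: l' => false :: mna_witness l'
  | true :: [::] => [:: true]
  | true :: _ :: l'' => true :: false :: mna_witness l''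
  end.

Fixpoint mna_ind (P : seq bool -> Prop) (P0 : P [::])
    (Pfalse : forall l, P l -> P (false :: l)) (P1 : P [:: true])
    (Ptrue : forall x l, P l -> P (true :: x :: l)) (l : seq bool) : P l :=
  match l with
  | [::] => P0
  | false :: l' => Pfalse l' (mna_ind P0 Pfalse P1 Ptrue l')
  | true :: [::] => P1
  | true :: x :: l'' => Ptrue x l'' (mna_ind P0 Pfalse P1 Ptrue l'')
  end.

Lemma mna_true (l : seq bool) : mna (true :: l) = (mna (behead l)).+1.
Proof. by case: l. Qed.

Lemma mna_rcons_false (l : seq bool) : mna (rcons l false) = mna l.
Proof. by elim/mna_ind: l => [|l IHl||x l IHl] //=; rewrite ?IHl. Qed.

Lemma size_mna_witness (l : seq bool) : size (mna_witness l) = size l.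
Proof. by elim/mna_ind: l => [|l IHl||x l IHl] //=; rewrite ?IHl. Qed.

Lemma count_mna_witness (l : seq bool) : count id (mna_witness l) = mna l.
Proof. by elim/mna_ind: l => [|l IHl||x l IHl] //=; rewrite ?IHl. Qed.

Lemma mna_witness_sub (l : seq bool) (i : nat) :
  nth false (mna_witness l) i -> nth false l i.
Proof. by elim/mna_ind: l i => [|l IHl||x l IHl] [|[|i]] //=; apply: IHl. Qed.

Lemma mna_witness_nonadj (l : seq bool) (i : nat) :
  nth false (mna_witness l) i -> ~~ nth false (mna_witness l) i.+1.
Proof. by elim/mna_ind: l i => [|l IHl||x l IHl] [|[|i]] //=; apply: IHl. Qed.

Lemma count_iotaS (P : pred nat) (n : nat) :
  count P (iota 0 n.+1) = P 0 + count (P \o succn) (iota 0 n).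
Proof. by rewrite /= (iotaDl 1 0) count_map. Qed.

Lemma count_nonadj_le_mna (l : seq bool) (J : pred nat) :
    (forall i, J i -> nth false l i) -> (forall i, J i -> ~~ J i.+1) ->
  count J (iota 0 (size l)) <= mna l.
Proof.
elim/mna_ind: l J => [|l IHl||x l IHl] J // Jl Jnonadj.
- rewrite count_iotaS; have -> : J 0 = false by apply/negP => /Jl.
  exact: IHl (fun i => Jl i.+1) (fun i => Jnonadj i.+1).
- by rewrite count_iotaS; case: (J 0).
- rewrite !count_iotaS addnA (_ : mna _ = 1 + mna l) //; apply: leq_add.
    case J0: (J 0); last exact: leq_b1.
    by rewrite /= (negbTE (Jnonadj 0 J0)).
  exact: IHl (fun i => Jl i.+2) (fun i => Jnonadj i.+2).
Qed.

Lemma card_set_nat (n : nat) (P : pred nat) :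
  #|[set i : 'I_n | P i]| = count P (iota 0 n).
Proof.
rewrite cardsE cardE -val_enum_ord count_map size_filter.
by rewrite enumT; apply: eq_count.
Qed.

Lemma card_set_ltn (n m : nat) : m <= n -> #|[set i : 'I_n | i < m]| = m.
Proof.
move=> le_mn; rewrite (card_set_nat n (gtn m)) -(subnKC le_mn) iotaD count_cat add0n.
rewrite (@eq_in_count _ (gtn m) predT (iota 0 m)) => [|k]; last by rewrite mem_iota.
rewrite (@eq_in_count _ (gtn m) pred0) => [|k]; last first.
  by rewrite mem_iota => /andP[le_mk _]; rewrite /= ltnNge le_mk.
by rewrite count_predT count_pred0 size_iota addn0.
Qed.

Lemma nth_map_iota (n : nat) (P : pred nat) (i : nat) :
  nth false [seq P k | k <- iota 0 n] i = (i < n) && P i.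
Proof.
have [ltin|leni] := ltnP i n; first by rewrite (nth_map 0) ?size_iota ?nth_iota.
by rewrite nth_default // size_map size_iota.
Qed.

Lemma card_nonadj_le_mna (n : nat) (P : pred nat) (I : {set 'I_n}) :
  [forall i in I, P i] -> nonadj I -> #|I| <= mna [seq P k | k <- iota 0 n].
Proof.
move=> /forall_inP PI /forall_inP nonadjI.
pose J : pred nat := fun i => i \in [seq val k | k <- enum I].
have -> : I = [set i : 'I_n | J i].
  by apply/setP => i; rewrite inE /J /= mem_map ?mem_enum //; exact: val_inj.
rewrite card_set_nat.
suff: count J (iota 0 (size [seq P k | k <- iota 0 n])) <= mna [seq P k | k <- iota 0 n].
  by rewrite size_map size_iota.
apply: count_nonadj_le_mna => [_ /mapP[k + ->] | _ /mapP[k + ->]]; rewrite mem_enum => Ik.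
  by rewrite nth_map_iota ltn_ord PI.
apply/mapP=> -[k']; rewrite mem_enum => Ik' kk'.
have /forall_inP/(_ k' Ik')/implyP := nonadjI k Ik.
by rewrite -(inj_eq val_inj); move: kk' => /= kk'; lia.
Qed.

Lemma exists_nonadj_mna (n : nat) (P : pred nat) :
  exists2 I : {set 'I_n}, [forall i in I, P i] && nonadj I & #|I| = mna [seq P k | k <- iota 0 n].
Proof.
set l := [seq P k | k <- iota 0 n]; set W := mna_witness l.
have size_W : size W = n by rewrite size_mna_witness size_map size_iota.
exists [set i : 'I_n | nth false W i]; last first.
  rewrite card_set_nat -count_mna_witness -/W -[in RHS](mkseq_nth false W) size_W.
  by rewrite /mkseq count_map.
apply/andP; split; apply/forall_inP => i; rewrite inE /= => Wi.
  by have := mna_witness_sub Wi; rewrite nth_map_iota => /andP[].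
apply/forall_inP => j; rewrite inE /= => Wj; apply/implyP => neq_ij.
have : [|| j == i.+1 :> nat, i == j.+1 :> nat | (i.+1 < j) || (j.+1 < i)].
  by move: neq_ij; rewrite -(inj_eq val_inj) /=; lia.
case/or3P=> [/eqP ji|/eqP ij|//].
  by have := mna_witness_nonadj Wi; rewrite -ji Wj.
by have := mna_witness_nonadj Wj; rewrite -ij Wi.
Qed.

Lemma max_nonadj_mna (n : nat) (P : pred nat) :
  \max_(I : {set 'I_n} | [forall i in I, P i] && nonadj I) #|I|
  = mna [seq P k | k <- iota 0 n].
Proof.
apply/eqP; rewrite eqn_leq; apply/andP; split.
  by apply/bigmax_leqP => I /andP[]; apply: card_nonadj_le_mna.
by have [I PI <-] := exists_nonadj_mna n P; apply: leq_bigmax_cond.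
Qed.

(** * Layered permutations *)

(* Positions [0 .. size b] are those of a permutation with descent word [b]:
   the maximal run of descents through [i] occupies [run_start i .. run_end i],
   and [layered_val] reverses every such run. *)
Section Runs.
Variable b : seq bool.
Local Notation bb k := (nth false b k).

Definition run_end (i : nat) : nat := i + find negb (drop i b).
Definition run_start (i : nat) : nat := i - find negb (rev (take i b)).
Definition layered_val (i : nat) : nat := run_start i + run_end i - i.

Lemma leq_run_end i : i <= run_end i. Proof. exact: leq_addr. Qed.

Lemma leq_run_start i : run_start i <= i. Proof. exact: leq_subr. Qed.

Lemma run_end_le_size i : i <= size b -> run_end i <= size b.
Proof. by have := find_size negb (drop i b); rewrite size_drop /run_end; lia. Qed.

Lemma nth_run_end i : bb (run_end i) = false.
Proof.
rewrite /run_end -nth_drop; have [has_f|] := boolP (has negb (drop i b)).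
  exact/negbTE/(nth_find false has_f).
by move=> /hasNfind->; rewrite nth_default.
Qed.

Lemma nth_run_before_end i k : i <= k -> k < run_end i -> bb k.
Proof.
move=> le_ik lt_k_end; have /(before_find false) : k - i < find negb (drop i b).
  by move: lt_k_end; rewrite /run_end; lia.
by rewrite nth_drop subnKC // => /negbFE.
Qed.

Lemma nth_run_endE k : bb k = (k < run_end k).
Proof.
apply/idP/idP => [bk|]; last exact: nth_run_before_end.
by rewrite ltn_neqAle leq_run_end andbT; apply: contraTneq bk => ->; rewrite nth_run_end.
Qed.

Section BeforeSize.
Variable i : nat.
Hypothesis le_i_size : i <= size b.

Let size_prefix : size (rev (take i b)) = i.
Proof. by rewrite size_rev size_take_min; lia. Qed.

Let nth_prefix k : k < i -> nth false (rev (take i b)) k = bb (i - k.+1).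
Proof. by move=> lt_ki; rewrite nth_rev ?size_prefix // size_takel // nth_take //; lia. Qed.

Lemma nth_run_after_start k : run_start i <= k -> k < i -> bb k.
Proof.
move=> le_start_k lt_ki; have lt_f : i - k.+1 < find negb (rev (take i b)).
  by have := find_size negb (rev (take i b)); move: le_start_k; rewrite /run_start; lia.
have := before_find false lt_f; rewrite nth_prefix; last by lia.
by rewrite (_ : i - _ = k) ?(negbFE) //; lia.
Qed.

Lemma nth_run_start_pred : 0 < run_start i -> bb (run_start i).-1 = false.
Proof.
rewrite /run_start => start_gt0.
have lt_f : find negb (rev (take i b)) < i by lia.
have has_f : has negb (rev (take i b)) by rewrite has_find size_prefix.
by have := nth_find false has_f; rewrite nth_prefix // subnS => /negbTE.
Qed.

End BeforeSize.

Lemma run_end_unique i e :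
  i <= e -> (forall k, i <= k -> k < e -> bb k) -> bb e = false -> run_end i = e.
Proof.
move=> le_ie inner be; case: (ltngtP (run_end i) e) => // [lt_end_e|lt_e_end].
  by have := inner _ (leq_run_end i) lt_end_e; rewrite nth_run_end.
by have := nth_run_before_end le_ie lt_e_end; rewrite be.
Qed.

Lemma run_start_unique i s0 : i <= size b -> s0 <= i ->
    (forall k, s0 <= k -> k < i -> bb k) -> (s0 = 0 \/ bb s0.-1 = false) ->
  run_start i = s0.
Proof.
move=> le_i_size le_s0i inner start_s0.
case: (ltngtP (run_start i) s0) => // [lt_start_s0|lt_s0_start].
  case: start_s0 => [s0_0|bs0]; first by lia.
  suff : bb s0.-1 by rewrite bs0.
  by apply: (nth_run_after_start le_i_size); lia.
suff : bb (run_start i).-1 by rewrite nth_run_start_pred //; lia.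
by apply: inner; have := leq_run_start i; lia.
Qed.

Lemma same_run i j : i <= size b -> j <= size b ->
  run_start i <= j <= run_end i -> run_end j = run_end i /\ run_start j = run_start i.
Proof.
move=> le_i_size le_j_size /andP[le_start_j le_j_end].
have inner k : run_start i <= k -> k < run_end i -> bb k.
  move=> le_start_k lt_k_end; case: (ltnP k i) => [lt_ki|le_ik].
    exact: (nth_run_after_start le_i_size).
  exact: (nth_run_before_end le_ik).
split; first by apply: run_end_unique => // [k *|]; [apply: inner; lia | apply: nth_run_end].
apply: run_start_unique => // [k *|]; first by apply: inner; lia.
by case: (posnP (run_start i)) => [|start_gt0]; [left | right; apply: nth_run_start_pred].
Qed.

Lemma ltn_layered_val i j : i < j -> j <= size b ->
  (layered_val i < layered_val j) = (run_end i < j).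
Proof.
move=> lt_ij le_j_size; have le_i_size : i <= size b by lia.
have := leq_run_start i; have := leq_run_start j; have := leq_run_end i; have := leq_run_end j.
rewrite /layered_val.
case: (ltnP (run_end i) j) => [lt_end_j | le_j_end] *.
  have : run_end i < run_start j.
    rewrite ltnNge; apply: contraFN (nth_run_end i) => le_start_end.
    exact: (nth_run_after_start le_j_size le_start_end lt_end_j).
  lia.
have [-> ->] : run_end j = run_end i /\ run_start j = run_start i.
  by apply: same_run => //; have := leq_run_start i; lia.
lia.
Qed.

Lemma layered_valK i : i <= size b -> layered_val (layered_val i) = i.
Proof.
move=> le_i_size; have := run_end_le_size le_i_size.
have := leq_run_start i; have := leq_run_end i => *.
rewrite {1}/layered_val.
have [-> ->] : run_end (layered_val i) = run_end i /\ run_start (layered_val i) = run_start i.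
  by apply: same_run => //; rewrite /layered_val; lia.
rewrite /layered_val; lia.
Qed.

End Runs.

Lemma ltn_swap_neq (x y : nat) : x != y -> (y < x) = ~~ (x < y).
Proof. by move=> neq_xy; rewrite -leqNgt ltn_neqAle eq_sym neq_xy. Qed.

Section PermNth.
Variables (n : nat) (s : 'S_n).

Definition perm_nth (i : nat) : nat := nth 0 (oneline s) i.

Lemma perm_nthE (i : 'I_n) : perm_nth i = s i.
Proof. by rewrite /perm_nth /oneline (nth_map i) ?size_enum_ord // nth_ord_enum. Qed.

Lemma perm_nth_inj i j : i < n -> j < n -> perm_nth i = perm_nth j -> i = j.
Proof.
move=> lt_in lt_jn; rewrite -[i]/(val (Ordinal lt_in)) -[j]/(val (Ordinal lt_jn)).
by rewrite !perm_nthE => /val_inj/perm_inj->.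
Qed.

Lemma ltn_perm_nth_swap i j : i < n -> j < n -> i != j ->
  (perm_nth j < perm_nth i) = ~~ (perm_nth i < perm_nth j).
Proof.
move=> lt_in lt_jn neq_ij; apply: ltn_swap_neq.
by apply: contra neq_ij => /eqP/(perm_nth_inj lt_in lt_jn)/eqP.
Qed.

Lemma perm_rank (i : 'I_n) : val (s i) = #|[set j | s j < s i]|.
Proof.
have -> : [set j | s j < s i] = s @^-1: [set v : 'I_n | v < s i].
  by apply/setP => j; rewrite !inE.
rewrite card_preimset ?card_set_ltn //; [exact: ltnW | exact: perm_inj].
Qed.

End PermNth.

Lemma perm_nth_ltn_inj (n : nat) (s t : 'S_n) :
    (forall i j, i < j < n -> (perm_nth s i < perm_nth s j) = (perm_nth t i < perm_nth t j)) ->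
  s = t.
Proof.
move=> same_order; apply/permP => i; apply: val_inj; rewrite (perm_rank s i) (perm_rank t i).
apply: eq_card => j; rewrite !inE -!perm_nthE.
case: (ltngtP j i) => [lt_ji|lt_ij|/val_inj->]; last by rewrite !ltnn.
  by apply: same_order; rewrite lt_ji ltn_ord.
have neq_ij : val i != val j by rewrite neq_ltn lt_ij.
rewrite (ltn_perm_nth_swap s (ltn_ord i) (ltn_ord j) neq_ij).
rewrite (ltn_perm_nth_swap t (ltn_ord i) (ltn_ord j) neq_ij).
by rewrite same_order // lt_ij ltn_ord.
Qed.

Section Layered.
Variables (n : nat) (t : n.-1.-tuple bool).

Let size_t : size t = n.-1. Proof. exact: size_tuple. Qed.

Lemma layered_val_ltn (i : 'I_n) : layered_val t i < n.
Proof.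
have := ltn_ord i; have := leq_run_start t i.
have := @run_end_le_size t i; rewrite /layered_val size_t; lia.
Qed.

Definition layered_fun (i : 'I_n) : 'I_n := Ordinal (layered_val_ltn i).

Lemma layered_funK : involutive layered_fun.
Proof.
move=> i; apply: val_inj; rewrite /= layered_valK // size_t.
by have := ltn_ord i; lia.
Qed.

Definition layered : 'S_n := perm (inv_inj layered_funK).

Lemma perm_nth_layered i : i < n -> perm_nth layered i = layered_val t i.
Proof.
by move=> lt_in; rewrite -[i]/(val (Ordinal lt_in)) perm_nthE permE.
Qed.

Lemma ltn_perm_nth_layered i j : i < j < n ->
  (perm_nth layered i < perm_nth layered j) = (run_end t i < j).
Proof.
case/andP=> lt_ij lt_jn; rewrite !perm_nth_layered ?(ltn_trans lt_ij) //.
by rewrite ltn_layered_val // size_t; lia.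
Qed.

End Layered.

(** * Avoiding 231 and 312 forces a layered permutation *)

Definition occurs3 (n : nat) (s : 'S_n) (t0 t1 t2 : nat) (a b c : nat) : Prop :=
  [/\ (perm_nth s a < perm_nth s b) = (t0 < t1), (perm_nth s a < perm_nth s c) = (t0 < t2)
    & (perm_nth s b < perm_nth s c) = (t1 < t2)].

Lemma avoids3P (n : nat) (s : 'S_n) (t0 t1 t2 : nat) : uniq [:: t0; t1; t2] ->
  reflect (forall a b c, a < b < c -> c < n -> ~ occurs3 s t0 t1 t2 a b c)
          (avoids s [:: t0; t1; t2]).
Proof.
rewrite /= !inE negb_or andbT => /andP[/andP[t01 t02] t12].
apply: (iffP idP) => [avoid a b c /andP[lt_ab lt_bc] lt_cn [e01 e02 e12] | no_occ].
  have lt_bn := ltn_trans lt_bc lt_cn; have lt_an := ltn_trans lt_ab lt_bn.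
  pose f := [ffun u : 'I_3 =>
    nth (Ordinal lt_an) [:: Ordinal lt_an; Ordinal lt_bn; Ordinal lt_cn] u].
  move/negP: avoid; apply; apply/existsP; exists f.
  have lt_ac := ltn_trans lt_ab lt_bc.
  have flip_ab := ltn_perm_nth_swap s lt_an lt_bn (negbT (ltn_eqF lt_ab)).
  have flip_ac := ltn_perm_nth_swap s lt_an lt_cn (negbT (ltn_eqF lt_ac)).
  have flip_bc := ltn_perm_nth_swap s lt_bn lt_cn (negbT (ltn_eqF lt_bc)).
  apply/forallP => -[[|[|[|//]]] ?]; apply/forallP => -[[|[|[|//]]] ?];
    rewrite !ffunE /= -!perm_nthE /= ?ltnn ?lt_ab ?lt_bc ?lt_ac //=;
    by rewrite ?flip_ab ?flip_ac ?flip_bc ?(ltn_swap_neq t01) ?(ltn_swap_neq t02)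
      ?(ltn_swap_neq t12) ?e01 ?e02 ?e12.
apply/negP => /existsP[f /forallP f_occ].
pose o0 := @Ordinal 3 0 isT; pose o1 := @Ordinal 3 1 isT; pose o2 := @Ordinal 3 2 isT.
move: (forallP (f_occ o0) o1) (forallP (f_occ o0) o2) (forallP (f_occ o1) o2) => /=.
move=> /andP[lt01 /eqP e01] /andP[lt02 /eqP e02] /andP[lt12 /eqP e12].
apply: (no_occ (f o0) (f o1) (f o2)); first by rewrite lt01 lt12.
  exact: ltn_ord.
by split; rewrite !perm_nthE.
Qed.

Lemma layered_avoids (n : nat) (t : n.-1.-tuple bool) :
  avoids (layered t) [:: 2; 3; 1] && avoids (layered t) [:: 3; 1; 2].
Proof.
have size_t : size t = n.-1 := size_tuple t.
apply/andP; split; apply/avoids3P => // a b c /andP[lt_ab lt_bc] lt_cn [];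
  rewrite !ltn_perm_nth_layered; try lia.
move=> /= e_ab e_ac e_bc.
have [end_ba _] : run_end t b = run_end t a /\ run_start t b = run_start t a.
  by apply: same_run; have := leq_run_start t a; lia.
lia.
Qed.

Lemma is_desE (n : nat) (s : 'S_n) k : k.+1 < n ->
  is_des s k = ~~ (perm_nth s k < perm_nth s k.+1).
Proof.
move=> lt_k1n; rewrite /is_des lt_k1n.
by apply: ltn_perm_nth_swap; rewrite // ?(ltn_trans (ltnSn k)) // neq_ltn ltnSn.
Qed.

Lemma perm_nth_descending (n : nat) (s : 'S_n) i j : i < j ->
    (forall k, i <= k < j -> perm_nth s k.+1 < perm_nth s k) ->
  perm_nth s j < perm_nth s i.
Proof.
elim: j => // j IHj; rewrite ltnS leq_eqVlt => /predU1P[<- | lt_ij] desc.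
  by apply: desc; rewrite leqnn ltnSn.
apply: ltn_trans (desc j _) (IHj lt_ij _); first by rewrite (ltnW lt_ij) ltnSn.
by move=> k /andP[le_ik lt_kj]; apply: desc; rewrite le_ik ltnW.
Qed.

Definition descent_word (n : nat) (s : 'S_n) : seq bool := [seq is_des s k | k <- iota 0 n.-1].

Lemma size_descent_word (n : nat) (s : 'S_n) : size (descent_word s) == n.-1.
Proof. by rewrite size_map size_iota. Qed.

Definition descent_tuple (n : nat) (s : 'S_n) : n.-1.-tuple bool := Tuple (size_descent_word s).

Lemma descent_tuple_layered (n : nat) (t : n.-1.-tuple bool) : descent_tuple (layered t) = t.
Proof.
apply: val_inj; apply: (@eq_from_nth _ false).
  by rewrite (eqP (size_descent_word _)) size_tuple.
move=> k; rewrite (eqP (size_descent_word _)) => lt_k_n1.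
rewrite /= nth_map_iota lt_k_n1 is_desE; last by lia.
by rewrite ltn_perm_nth_layered ?ltnSn -?leqNgt -?nth_run_endE //; lia.
Qed.

Section Avoider.
Variables (n : nat) (s : 'S_n).
Hypotheses (avoid231 : avoids s [:: 2; 3; 1]) (avoid312 : avoids s [:: 3; 1; 2]).
Local Notation v := (perm_nth s).

Lemma no231 a b c : a < b < c -> c < n -> v c < v a < v b -> False.
Proof.
move=> abc lt_cn /andP[ca ab].
by apply: (elimT (@avoids3P _ s 2 3 1 isT) avoid231 a b c abc lt_cn); split => /=; lia.
Qed.

Lemma no312 a b c : a < b < c -> c < n -> v b < v c < v a -> False.
Proof.
move=> abc lt_cn /andP[bc ca].
by apply: (elimT (@avoids3P _ s 3 1 2 isT) avoid312 a b c abc lt_cn); split => /=; lia.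
Qed.

Lemma ascent_separates k a c : k.+1 < n -> v k < v k.+1 -> a <= k < c -> c < n -> v a < v c.
Proof.
move=> lt_k1n asc_k /andP[le_ak lt_kc] lt_cn.
have neq x y : x < n -> y < n -> x != y -> v x != v y.
  by move=> lt_xn lt_yn; apply: contraNneq => /(perm_nth_inj lt_xn lt_yn) ->.
(* Otherwise (a, k, k+1) would be an occurrence of 312, and (a, k+1, c) one of 231. *)
have lt_a_k1 : v a < v k.+1.
  have [lt_ak|->//] : a < k \/ a = k by lia.
  rewrite -[_ < _]negbK -(ltn_swap_neq (neq a k.+1 _ _ _)); try lia.
  by apply/negP => lt_k1a; apply: (@no312 a k k.+1); rewrite ?asc_k ?lt_k1a //; lia.
have [->//|lt_k1c] : c = k.+1 \/ k.+1 < c by lia.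
rewrite -[_ < _]negbK -(ltn_swap_neq (neq a c _ _ _)); try lia.
by apply/negP => lt_ca; apply: (@no231 a k.+1 c); rewrite ?lt_ca ?lt_a_k1 //; lia.
Qed.

Lemma avoider_ltn_perm_nth i j : i < j < n -> (v i < v j) = (run_end (descent_word s) i < j).
Proof.
case/andP=> lt_ij lt_jn; set e := run_end _ i.
have nth_dw k : nth false (descent_word s) k = (k < n.-1) && is_des s k by exact: nth_map_iota.
case: (ltnP e j) => [lt_ej | le_je].
  have le_ie : i <= e := leq_run_end _ i.
  have := nth_run_end (descent_word s) i; rewrite -/e nth_dw (_ : e < n.-1) /=; last by lia.
  rewrite is_desE; last by lia.
  by move/negbFE => asc_e; apply: (ascent_separates _ asc_e); rewrite ?le_ie; lia.
apply/negbTE; rewrite -leqNgt ltnW //; apply: perm_nth_descending => // k /andP[le_ik lt_kj].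
have := nth_run_before_end le_ik (leq_trans lt_kj le_je); rewrite nth_dw => /andP[_].
by rewrite /is_des => /andP[].
Qed.

Lemma layered_descent_tuple : layered (descent_tuple s) = s.
Proof.
apply: perm_nth_ltn_inj => i j ijn.
by rewrite ltn_perm_nth_layered // avoider_ltn_perm_nth.
Qed.

End Avoider.

(** * Statistics and the generating function *)

Lemma iota_predn (n : nat) : 0 < n -> iota 0 n = rcons (iota 0 n.-1) n.-1.
Proof. by case: n => // n _; rewrite -cats1 -addn1 iotaD addn1. Qed.

Section LastPositionFalse.
Variables (n : nat) (P : pred nat).
Hypothesis P_last : ~~ P n.-1.

Lemma count_iota_predn : count P (iota 0 n) = count P (iota 0 n.-1).
Proof.
case: (posnP n) => [->|n_gt0] //.
by rewrite iota_predn // -cats1 count_cat /= (negbTE P_last) !addn0.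
Qed.

Lemma mna_iota_predn : mna [seq P k | k <- iota 0 n] = mna [seq P k | k <- iota 0 n.-1].
Proof.
case: (posnP n) => [->|n_gt0] //.
by rewrite iota_predn // map_rcons (negbTE P_last) mna_rcons_false.
Qed.

End LastPositionFalse.

Section DescentStatistics.
Variables (n : nat) (s : 'S_n).

Lemma is_asc_last : ~~ is_asc s n.-1.
Proof. by rewrite /is_asc ltnNge leqSpred. Qed.

Lemma is_des_last : ~~ is_des s n.-1.
Proof. by rewrite /is_des ltnNge leqSpred. Qed.

Lemma ascent_word : [seq is_asc s k | k <- iota 0 n.-1] = map negb (descent_word s).
Proof.
rewrite -map_comp; apply/eq_in_map => k; rewrite mem_iota add0n => lt_k_n1 /=.
have lt_k1n : k.+1 < n by lia.
by rewrite is_desE // negbK /is_asc lt_k1n.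
Qed.

Lemma des_descent_word : des s = count id (descent_word s).
Proof. by rewrite /des count_iota_predn ?is_des_last // count_map. Qed.

Lemma asc_descent_word : asc s = count negb (descent_word s).
Proof.
by rewrite /asc count_iota_predn ?is_asc_last // -(count_map (is_asc s) id) ascent_word count_map.
Qed.

Lemma MND_descent_word : MND s = mna (descent_word s).
Proof. by rewrite /MND max_nonadj_mna mna_iota_predn ?is_des_last. Qed.

Lemma MNA_descent_word : MNA s = mna (map negb (descent_word s)).
Proof. by rewrite /MNA max_nonadj_mna mna_iota_predn ?is_asc_last // ascent_word. Qed.

End DescentStatistics.

Definition mna_from (blocked : bool) (l : seq bool) : nat :=
  mna (if blocked then behead l else l).

Lemma mna_from_cons blocked x l :
  mna_from blocked (x :: l) = (x && ~~ blocked) + mna_from (x && ~~ blocked) l.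
Proof. by case: blocked; case: x => //; rewrite /mna_from mna_true. Qed.

Local Open Scope ring_scope.

Lemma big_tuple_cons (R : nmodType) (T : finType) (m : nat) (F : seq T -> R) :
  \sum_(t : m.+1.-tuple T) F t = \sum_(x : T) \sum_(t : m.-tuple T) F (x :: t).
Proof.
rewrite pair_big /= (reindex (fun xt : T * m.-tuple T => cons_tuple xt.1 xt.2)) //=.
exists (fun t : m.+1.-tuple T => (thead t, [tuple of behead t])) => [[x t] _ | t _] /=.
  by congr pair; apply: val_inj.
by apply: val_inj => /=; rewrite [in RHS](tuple_eta t).
Qed.

Lemma big_tuple0 (R : nmodType) (T : finType) (F : seq T -> R) :
  \sum_(t : 0.-tuple T) F t = F [::].
Proof.
rewrite (eq_bigr (fun=> F [::])) => [|t _]; last by rewrite tuple0.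
by rewrite sumr_const card_tuple.
Qed.

Section Weights.
Variables (R : comNzRingType) (p q y z : R).

(* [ba] (resp. [bd]) records that the previous letter was an ascent (resp. a
   descent) taken by the greedy count, which then cannot take the next one. *)
Definition weight (ba bd : bool) (l : seq bool) : R :=
  p ^+ count negb l * q ^+ count id l * y ^+ mna_from ba (map negb l) * z ^+ mna_from bd l.

Lemma weight_cons ba bd x l : weight ba bd (x :: l) =
  if x then q * z ^+ (~~ bd) * weight false (~~ bd) l
  else p * y ^+ (~~ ba) * weight (~~ ba) false l.
Proof.
rewrite /weight /= !mna_from_cons.
by case: x ba bd => [] [] []; rewrite /= ?add0n ?add1n ?exprS ?expr0; ring.
Qed.

Definition weight_sum (ba bd : bool) (m : nat) : R := \sum_(t : m.-tuple bool) weight ba bd t.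

Lemma weight_sum0 ba bd : weight_sum ba bd 0 = 1.
Proof.
by rewrite /weight_sum big_tuple0 /weight; case: ba bd => [] [] /=; rewrite !expr0 !mulr1.
Qed.

Lemma weight_sumS ba bd m : weight_sum ba bd m.+1 =
  q * z ^+ (~~ bd) * weight_sum false (~~ bd) m + p * y ^+ (~~ ba) * weight_sum (~~ ba) false m.
Proof.
rewrite /weight_sum big_tuple_cons big_bool !mulr_sumr.
by congr (_ + _); apply: eq_bigr => t _; rewrite weight_cons.
Qed.

Lemma weight_sum_rec m :
  weight_sum false false m.+3 =
    (p ^+ 2 * y + q ^+ 2 * z + p * q * y * z) * weight_sum false false m.+1
    + (p ^+ 2 * q + p * q ^+ 2) * y * z * weight_sum false false m.
Proof. rewrite !weight_sumS /=; ring. Qed.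

End Weights.

Section GeneratingFunction.
Variables (R : comNzRingType) (p q y z : R).

Let a : R := p ^+ 2 * y + q ^+ 2 * z + p * q * y * z.
Let b : R := (p ^+ 2 * q + p * q ^+ 2) * y * z.

Lemma perm_weight_descent_word (n : nat) (s : 'S_n) :
  p ^+ asc s * q ^+ des s * y ^+ MNA s * z ^+ MND s = weight p q y z false false (descent_word s).
Proof. by rewrite asc_descent_word des_descent_word MNA_descent_word MND_descent_word. Qed.

(* [n.-1]: [S_0] and [S_1] each consist of one permutation, with empty descent word. *)
Lemma Gcoef_weight_sum n : Gcoef p q y z n = weight_sum p q y z false false n.-1.
Proof.
rewrite /Gcoef (reindex (@layered n)) /=; last first.
  exists (@descent_tuple n) => [t _ | s /andP[avoid231 avoid312]].
    exact: descent_tuple_layered.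
  exact: layered_descent_tuple.
rewrite (eq_bigl predT) => [|t]; last exact: layered_avoids.
apply: eq_bigr => t _; rewrite perm_weight_descent_word.
by have /(congr1 val) /= -> := descent_tuple_layered t.
Qed.

Lemma Gcoef_small :
  [/\ Gcoef p q y z 0 = 1, Gcoef p q y z 1 = 1, Gcoef p q y z 2 = p * y + q * z
    & Gcoef p q y z 3 = p ^+ 2 * y + q ^+ 2 * z + 2 * p * q * y * z].
Proof. by split; rewrite Gcoef_weight_sum /= ?weight_sumS /= ?weight_sum0; ring. Qed.

Lemma Gcoef_rec m : Gcoef p q y z m.+4 = a * Gcoef p q y z m.+2 + b * Gcoef p q y z m.+1.
Proof. by rewrite !Gcoef_weight_sum weight_sum_rec. Qed.

Lemma coef_Gden i : (Gden p q y z)`_i =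
  if i == 0%N then 1 else if i == 2%N then - a else if i == 3%N then - b else 0.
Proof.
have -> : Gden p q y z = 1 - a%:P * 'X^2 - b%:P * 'X^3 by rewrite /Gden /a /b; ring.
by rewrite !coefB coef1 !coefCM !coefXn; case: i => [|[|[|[|i]]]] /=; ring.
Qed.

Lemma coef_Gnum i : (Gnum p q y z)`_i =
  if i == 0%N then 1 else if i == 1%N then 1
  else if i == 2%N then p * y + q * z - a else if i == 3%N then p * q * y * z - b else 0.
Proof.
have -> : Gnum p q y z = 1 + 'X + (p * y + q * z - a)%:P * 'X^2 + (p * q * y * z - b)%:P * 'X^3.
  by rewrite /Gnum /a /b; ring.
by rewrite !coefD coef1 coefX !coefCM !coefXn; case: i => [|[|[|[|i]]]] /=; ring.
Qed.

End GeneratingFunction.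

Unset Implicit Arguments.

Theorem theorem6 (R : comNzRingType) (p q y z : R) (n : nat) :
  \sum_(k < n.+1) Gcoef p q y z k * (Gden p q y z)`_(n - k) = (Gnum p q y z)`_n.
Proof.
have [G0 G1 G2 G3] := Gcoef_small p q y z.
case: n => [|[|[|[|m]]]].
1-4: by rewrite !big_ord_recr big_ord0 /= !coef_Gden coef_Gnum /= ?G0 ?G1 ?G2 ?G3; ring.
do 4 rewrite big_ord_recr /=.
rewrite big1 => [|k _]; last first.
  have [j ->] : exists j, (m.+4 - k = j.+4)%N by exists (m - k)%N; have := ltn_ord k; lia.
  by rewrite coef_Gden mulr0.
have [-> -> ->] : [/\ m.+4 - m.+1 = 3, m.+4 - m.+2 = 2 & m.+4 - m.+3 = 1]%N by split; lia.
by rewrite subnn !coef_Gden coef_Gnum /= Gcoef_rec; ring.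
Qed.
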